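(* Let $G$ be a graph and $a\neq b$ vertices of $G$. The pair state $e_a-e_b$ is fixed if and only if $a$ and $b$ are twins in $G$, i.e. $N(a)\setminus\{b\}=N(b)\setminus\{a\}$.
   Context: $N(v)$ denotes the set of neighbours of $v$. With $L=\Delta-A$ the Laplacian of $G$ and $U(t)=\exp(itL)$, the pair state $e_a-e_b$ is fixed if for every $t\ge 0$ there is $\gamma\in\mathbb{C}$ with $|\gamma|=1$ (possibly depending on $t$) such that $U(t)(e_a-e_b)=\gamma(e_a-e_b)$. *)

From mathcomp Require Import all_boot all_order all_algebra complex.
From mathcomp Require Import all_classical all_reals all_analysis.
Set Implicit Arguments. Unset Strict Implicit. Unset Printing Implicit Defensive.
Import Order.TTheory GRing.Theory Num.Theory numFieldNormedType.Exports.
Local Open Scope ring_scope.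

Definition simple_graph (n : nat) (adj : rel 'I_n) : Prop :=
  symmetric adj /\ irreflexive adj.

Definition nbhd (n : nat) (adj : rel 'I_n) (v : 'I_n) : {set 'I_n} :=
  [set w | adj v w].

Definition adj_mx (R : realType) (n : nat) (adj : rel 'I_n) : 'M[R]_n :=
  \matrix_(i, j) (adj i j)%:R.
Definition deg_mx (R : realType) (n : nat) (adj : rel 'I_n) : 'M[R]_n :=
  \matrix_(i, j) (if i == j then #|nbhd adj i|%:R else 0).
Definition laplacian (R : realType) (n : nat) (adj : rel 'I_n) : 'M[R]_n :=
  deg_mx R adj - adj_mx R adj.

Definition mxpow (C : pzRingType) (n : nat) (M : 'M[C]_n) (k : nat) : 'M[C]_n :=
  iter k (mulmx M) 1%:M.

Definition expm_partial (R : realType) (n : nat) (M : 'M[R[i]]_n) (N : nat)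
  : 'M[R[i]]_n :=
  \sum_(k < N) ((k`!)%:R)^-1 *: mxpow M k.

Definition expm (R : realType) (n : nat) (M : 'M[R[i]]_n) : 'M[R[i]]_n :=
  \matrix_(i, j)
    ((limn (fun N => complex.Re (expm_partial M N i j)))
       +i* (limn (fun N => complex.Im (expm_partial M N i j))))%C.

Definition transition (R : realType) (n : nat) (adj : rel 'I_n) (t : R)
  : 'M[R[i]]_n :=
  expm ((('i : R[i]) * (t%:C)%C) *: map_mx (fun x : R => (x%:C)%C) (laplacian R adj)).

Definition evec (R : realType) (n : nat) (v : 'I_n) : 'cV[R[i]]_n :=
  delta_mx v 0.

Definition pair_fixed (R : realType) (n : nat) (adj : rel 'I_n) (a b : 'I_n)
  : Prop :=
  forall t : R, 0 <= t ->
    exists gamma : R[i],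
      (complex.Re gamma) ^+ 2 + (complex.Im gamma) ^+ 2 = 1 /\
      transition adj t *m (evec R a - evec R b) = gamma *: (evec R a - evec R b).

Definition twins (n : nat) (adj : rel 'I_n) (a b : 'I_n) : Prop :=
  nbhd adj a :\ b = nbhd adj b :\ a.

From mathcomp Require Import all_boot all_order all_algebra complex.
From mathcomp Require Import all_classical all_reals all_analysis.
From mathcomp Require Import ring lra.
Set Implicit Arguments. Unset Strict Implicit. Unset Printing Implicit Defensive.
Import Order.TTheory GRing.Theory Num.Theory numFieldNormedType.Exports.
Local Open Scope ring_scope.

(* If a and b are twins, e_a - e_b is an eigenvector of the Laplacian L
   (eigenvalue deg a + [a ~ b]), so exp(itL) only multiplies it by a phase.
   Conversely, if the pair state is fixed then, for every vertex x other than
   a and b, the x-entry of exp(itL)(e_a - e_b) vanishes for all t >= 0.  Its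
   imaginary part is sum_k sin_coeff t k * (L^k (e_a - e_b))_x, whose linear
   term t * (L (e_a - e_b))_x = t * (A_xb - A_xa) dominates the O(t^2) tail
   for small t; hence A_xa = A_xb for all such x, i.e. a and b are twins. *)

Section ComplexPowers.
Variable R : realType.
Local Open Scope complex_scope.

Lemma ReD (w z : R[i]) : complex.Re (w + z) = complex.Re w + complex.Re z.
Proof. by case: w; case: z. Qed.

Lemma ImD (w z : R[i]) : complex.Im (w + z) = complex.Im w + complex.Im z.
Proof. by case: w; case: z. Qed.

Lemma complex_mul_real (p q r : R) : (p +i* q) * r%:C = (p * r) +i* (q * r).
Proof.
have -> : (p +i* q) * r%:C = (p * r - q * 0) +i* (p * 0 + q * r) by [].
by rewrite !mulr0 subr0 add0r.
Qed.

Lemma Re_sum (I : finType) (f : I -> R[i]) :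
  complex.Re (\sum_i f i) = \sum_i complex.Re (f i).
Proof. by apply: big_morph; [exact: ReD | ]. Qed.

Lemma Im_sum (I : finType) (f : I -> R[i]) :
  complex.Im (\sum_i f i) = \sum_i complex.Im (f i).
Proof. by apply: big_morph; [exact: ImD | ]. Qed.

Lemma Re_mul_real (w : R[i]) (r : R) : complex.Re (w * r%:C) = complex.Re w * r.
Proof. by case: w => p q; rewrite complex_mul_real. Qed.

Lemma Im_mul_real (w : R[i]) (r : R) : complex.Im (w * r%:C) = complex.Im w * r.
Proof. by case: w => p q; rewrite complex_mul_real. Qed.

Lemma complex_sum (I : finType) (f g : I -> R) :
  \sum_i (f i +i* g i) = (\sum_i f i) +i* (\sum_i g i).
Proof. by apply/eqP; rewrite eq_complex Re_sum Im_sum !eqxx. Qed.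

Lemma expr_it_double (t : R) m :
  ('i * t%:C) ^+ m.*2 = ((-1) ^+ m * t ^+ m.*2)%:C.
Proof.
have sq : ('i * t%:C) ^+ 2 = (- t ^+ 2)%:C.
  by rewrite exprMn sqr_i mulN1r -rmorphXn rmorphN.
rewrite -muln2 mulnC exprM sq -rmorphXn; congr (_%:C).
by rewrite exprM -exprNn.
Qed.

Lemma expr_it_double_succ (t : R) m :
  ('i * t%:C) ^+ m.*2.+1 = 0 +i* ((-1) ^+ m * t ^+ m.*2.+1).
Proof.
rewrite exprS expr_it_double [t ^+ _.+1]exprS.
set c := (-1) ^+ m * t ^+ m.*2.
have -> : 'i * t%:C * c%:C = ((0 * t - 1 * 0) * c - (0 * 0 + 1 * t) * 0)
                            +i* ((0 * t - 1 * 0) * 0 + (0 * 0 + 1 * t) * c) by [].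
by congr (_ +i* _); rewrite /c; ring.
Qed.

Lemma Re_expr_it (t : R) k :
  complex.Re (('i * t%:C) ^+ k) = (~~ odd k)%:R * (-1) ^+ k./2 * t ^+ k.
Proof.
move: (odd_double_half k); set m := k./2; case: (odd k) => <-.
  by rewrite -[(true + _)%N]/(m.*2.+1) expr_it_double_succ /= !mul0r.
by rewrite -[(false + _)%N]/(m.*2) expr_it_double /= mul1r.
Qed.

Lemma Im_expr_it (t : R) k :
  complex.Im (('i * t%:C) ^+ k) = (odd k)%:R * (-1) ^+ k.-1./2 * t ^+ k.
Proof.
move: (odd_double_half k); set m := k./2; case: (odd k) => <-.
  by rewrite -[(true + _)%N]/(m.*2.+1) expr_it_double_succ /= mul1r doubleK.
by rewrite -[(false + _)%N]/(m.*2) expr_it_double /= !mul0r.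
Qed.

End ComplexPowers.

Section Series.
Variable R : realType.

Lemma norm_cos_coeff_le (t : R) k : `|cos_coeff t k| <= exp_coeff `|t| k.
Proof.
rewrite /cos_coeff /exp_coeff /= !normrM normfV !normr_nat !normrX normrN1.
by rewrite expr1n mulr1; case: odd; rewrite ?mul1r // !mul0r divr_ge0 ?exprn_ge0.
Qed.

Lemma norm_sin_coeff_le (t : R) k : `|sin_coeff t k| <= exp_coeff `|t| k.
Proof.
rewrite /sin_coeff /exp_coeff /= !normrM normfV !normr_nat !normrX normrN1.
by rewrite expr1n mulr1; case: odd; rewrite ?mul1r // !mul0r divr_ge0 ?exprn_ge0.
Qed.

Lemma is_cvg_series_exp_dominated (f w : R ^nat) (s C c : R) :
  0 <= s -> 0 <= C -> 0 <= c ->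
  (forall k, `|f k| <= exp_coeff s k) -> (forall k, `|w k| <= C * c ^+ k) ->
  cvgn (series (fun k => f k * w k)).
Proof.
move=> s0 C0 c0 fs wC; apply: normed_cvg.
have cE : cvgn (series (C *: exp_coeff (s * c))).
  by apply: is_cvg_seriesZ; exact: is_cvg_series_exp_coeff.
apply: (series_le_cvg _ _ _ cE) => k /=.
- exact: normr_ge0.
- by rewrite mulr_ge0 // exp_coeff_ge0 // mulr_ge0.
- rewrite normrM; apply: le_trans (ler_pM (normr_ge0 _) (normr_ge0 _) (fs k) (wC k)) _.
  rewrite -[leRHS]/(C * exp_coeff (s * c) k) /exp_coeff /= exprMn.
  by rewrite [leRHS](_ : _ = s ^+ k / k`!%:R * (C * c ^+ k)) //; ring.
Qed.

Lemma lim_series_sum_mulr (I : finType) (u : I -> R ^nat) (a : I -> R) :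
  (forall i, cvgn (series (u i))) ->
  limn (series (fun k => \sum_i u i k * a i)) = \sum_i limn (series (u i)) * a i.
Proof.
move=> cu.
have -> : series (fun k => \sum_i u i k * a i) = fun N => \sum_i series (u i) N * a i.
  apply/funext => N; rewrite /series /= exchange_big.
  by apply: eq_bigr => i _; rewrite mulr_suml.
apply: cvg_lim => //; apply: cvg_big => [|i _]; first exact: add_continuous.
by apply: cvgM; [exact: cu | exact: cvg_cst].
Qed.

Lemma ler_lim_series_sub (g D : R ^nat) m :
  cvgn (series g) -> cvgn (series D) -> (forall k, 0 <= D k) ->
  (forall k, (m <= k)%N -> `|g k| <= D k) ->
  `|limn (series g) - series g m| <= limn (series D).
Proof.
move=> cg cD D0 gD.
have bound N : (m <= N)%N -> `|series g N - series g m| <= limn (series D).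
  move=> mN; rewrite sub_series_geq //.
  apply: le_trans (ler_norm_sum _ _ _) _.
  apply: (@le_trans _ _ (series D N - series D m)).
    by rewrite sub_series_geq //; apply: ler_sum_nat => k /andP[mk _]; exact: gD.
  apply: le_trans (nondecreasing_cvgn_le _ cD N); last first.
    by apply: nondecreasing_series => k _ _; exact: D0.
  by rewrite gerBl; apply: sumr_ge0 => k _.
have near_bound : \forall N \near eventually,
    series g m - limn (series D) <= series g N <= series g m + limn (series D).
  by near=> N; rewrite -ler_distl; apply: bound; near: N; exact: nbhs_infty_ge.
rewrite ler_distl; apply/andP; split.
  by apply: limr_ge => //; apply: filterS near_bound => N /andP[].
by apply: limr_le => //; apply: filterS near_bound => N /andP[].
Unshelve. all: by end_near. Qed.

Lemma linear_le_quadratic_eq0 (c K : R) :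
  (forall t, 0 < t <= 1 -> `|c| * t <= K * t ^+ 2) -> c = 0.
Proof.
move=> h; apply/normr0_eq0/eqP; rewrite eq_le normr_ge0 andbT; apply: contraT.
rewrite -ltNge => c0.
have cK : `|c| <= K by have := h 1; rewrite ltr01 lexx expr1n !mulr1; exact.
set t := `|c| / (`|c| + K).
have cK0 : 0 < `|c| + K by lra.
have tE : t * (`|c| + K) = `|c| by rewrite /t mulfVK // gt_eqF.
have t0 : 0 < t by rewrite divr_gt0.
have t1 : t <= 1 by rewrite ler_pdivrMr // mul1r; lra.
have := h t; rewrite t0 t1 => /(_ isT) ht.
have ctK : `|c| <= K * t by rewrite -(ler_pM2r t0) -mulrA -expr2.
have : 0 < t * `|c| by rewrite mulr_gt0.
nra.
Qed.

Lemma sin_series_coeff1_eq0 (w : R ^nat) (C c : R) : 0 <= C -> 0 <= c ->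
  (forall k, `|w k| <= C * c ^+ k) ->
  (forall t, 0 < t <= 1 -> limn (series (fun k => sin_coeff t k * w k)) = 0) ->
  w 1%N = 0.
Proof.
move=> C0 c0 wC h0.
apply: (@linear_le_quadratic_eq0 _ (C * limn (series (exp_coeff c)))).
move=> t /andP[t0 t1].
set g := fun k => sin_coeff t k * w k.
have cg : cvgn (series g).
  exact: is_cvg_series_exp_dominated (normr_ge0 t) C0 c0 (norm_sin_coeff_le t) wC.
have cE := is_cvg_series_exp_coeff c.
have cD : cvgn (series ((t ^+ 2 * C) *: exp_coeff c)) by exact: is_cvg_seriesZ.
have g2 : series g 2 = t * w 1%N.
  rewrite /series /= !big_nat_recl // big_geq // /g /sin_coeff /=.
  by rewrite !mul0r add0r addr0 expr0 expr1 !mul1r invr1 mulr1.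
have tail :
    `|limn (series g) - series g 2| <= limn (series ((t ^+ 2 * C) *: exp_coeff c)).
  apply: (ler_lim_series_sub (m := 2)) => // k.
    rewrite -[leRHS]/(t ^+ 2 * C * exp_coeff c k).
    by rewrite mulr_ge0 ?exp_coeff_ge0 // mulr_ge0 // exprn_ge0 // ltW.
  move=> k2; rewrite -[leRHS]/(t ^+ 2 * C * exp_coeff c k) /g normrM.
  apply: le_trans (ler_pM (normr_ge0 _) (normr_ge0 _) (norm_sin_coeff_le t k) (wC k)) _.
  have tk : t ^+ k <= t ^+ 2.
    by rewrite -(subnKC k2) exprD ler_piMr ?exprn_ge0 ?exprn_ile1 // ltW.
  rewrite /exp_coeff /= (gtr0_norm t0).
  rewrite -[leLHS]/(t ^+ k / k`!%:R * (C * c ^+ k)) [leLHS]mulrAC -mulrA.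
  rewrite [leRHS](_ : _ = t ^+ 2 * (C * c ^+ k / k`!%:R)); last by ring.
  by rewrite ler_wpM2r // !mulr_ge0 ?invr_ge0 ?exprn_ge0.
have g0 : limn (series g) = 0 by apply: h0; rewrite t0 t1.
rewrite g0 lim_seriesZ // g2 sub0r normrN normrM (gtr0_norm t0) in tail.
by rewrite mulrC [leRHS]mulrC mulrA.
Qed.

End Series.

Section MatrixPowers.

Lemma mxpowS (T : pzRingType) m (A : 'M[T]_m) k : mxpow A k.+1 = A *m mxpow A k.
Proof. by []. Qed.

Lemma mxpow_mulmx_eigen (T : comPzRingType) m (A : 'M[T]_m) (v : 'cV[T]_m) a k :
  A *m v = a *: v -> mxpow A k *m v = a ^+ k *: v.
Proof.
move=> Av; elim: k => [|k IH]; first by rewrite mul1mx expr0 scale1r.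
by rewrite mxpowS -mulmxA IH -scalemxAr Av scalerA exprSr.
Qed.

Variable R : numDomainType.

Definition mx_l1 m p (A : 'M[R]_(m, p)) : R := \sum_i \sum_j `|A i j|.

Lemma mx_l1_ge0 m p (A : 'M[R]_(m, p)) : 0 <= mx_l1 A.
Proof. by apply: sumr_ge0 => i _; apply: sumr_ge0. Qed.

Lemma ler_norm_mx_l1 m p (A : 'M[R]_(m, p)) i j : `|A i j| <= mx_l1 A.
Proof.
rewrite /mx_l1 (bigD1 i) //= (bigD1 j) //= -addrA lerDl.
by rewrite addr_ge0 ?sumr_ge0 // => k _; rewrite sumr_ge0.
Qed.

Lemma mx_l1_mulmx_le m p q (A : 'M[R]_(m, p)) (B : 'M[R]_(p, q)) :
  mx_l1 (A *m B) <= mx_l1 A * mx_l1 B.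
Proof.
rewrite /mx_l1 mulr_suml; apply: ler_sum => i _.
apply: (@le_trans _ _ (\sum_j \sum_l `|A i l| * `|B l j|)).
  apply: ler_sum => j _; rewrite mxE.
  by apply: le_trans (ler_norm_sum _ _ _) _; under eq_bigr do rewrite normrM.
rewrite exchange_big mulr_suml; apply: ler_sum => l _; rewrite -mulr_sumr.
apply: ler_wpM2l => //; rewrite (bigD1 l) //= lerDl.
by apply: sumr_ge0 => k _; apply: sumr_ge0.
Qed.

Lemma mx_l1_mxpow_mulmx_le m p (A : 'M[R]_m) (B : 'M[R]_(m, p)) k :
  mx_l1 (mxpow A k *m B) <= mx_l1 B * mx_l1 A ^+ k.
Proof.
rewrite mulrC; elim: k => [|k IH]; first by rewrite mul1mx expr0 mul1r.
rewrite mxpowS -mulmxA exprS -mulrA.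
by apply: le_trans (mx_l1_mulmx_le _ _) _; rewrite ler_wpM2l ?mx_l1_ge0.
Qed.

End MatrixPowers.

Section MatrixExponential.
Variables (R : realType) (n : nat) (M : 'M[R]_n).
Local Open Scope complex_scope.
Local Notation cmx A := (map_mx (fun x : R => x%:C) A).

Definition expi_mx (t : R) : 'M[R[i]]_n := expm (('i * t%:C) *: cmx M).

Lemma mxpow_scale_cmx_entry (z : R[i]) k i j :
  mxpow (z *: cmx M) k i j = z ^+ k * (mxpow M k i j)%:C.
Proof.
elim: k i j => [|k IH] i j; first by rewrite !mxE expr0 mul1r rmorph_nat.
rewrite !mxpowS !mxE rmorph_sum mulr_sumr; apply: eq_bigr => l _.
by rewrite IH !mxE rmorphM exprS; ring.
Qed.

Lemma expi_mx_entry t i j :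
  expi_mx t i j = limn (series (fun k => cos_coeff t k * mxpow M k i j))
                  +i* limn (series (fun k => sin_coeff t k * mxpow M k i j)).
Proof.
have partialE N : expm_partial (('i * t%:C) *: cmx M) N i j
    = \sum_(k < N) ('i * t%:C) ^+ k * (mxpow M k i j / k`!%:R)%:C.
  rewrite /expm_partial summxE; apply: eq_bigr => k _.
  by rewrite mxE mxpow_scale_cmx_entry rmorphM fmorphV rmorph_nat; ring.
rewrite /expi_mx /expm mxE; congr (limn _ +i* limn _); apply/funext => N;
  rewrite partialE ?Re_sum ?Im_sum /series /= big_mkord; apply: eq_bigr => k _.
  by rewrite Re_mul_real Re_expr_it /cos_coeff /= -exprnP; ring.
by rewrite Im_mul_real Im_expr_it /sin_coeff /=; ring.
Qed.

Lemma is_cvg_series_mxpow (f : R ^nat) s p (B : 'M[R]_(n, p)) x y : 0 <= s ->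
  (forall k, `|f k| <= exp_coeff s k) ->
  cvgn (series (fun k => f k * (mxpow M k *m B) x y)).
Proof.
move=> s0 fs; apply: is_cvg_series_exp_dominated s0 (mx_l1_ge0 B) (mx_l1_ge0 M) fs _.
by move=> k; apply: le_trans (ler_norm_mx_l1 _ x y) (mx_l1_mxpow_mulmx_le _ _ _).
Qed.

Lemma expi_mx_mulmx t (v : 'cV[R]_n) x :
  (expi_mx t *m cmx v) x 0
  = limn (series (fun k => cos_coeff t k * (mxpow M k *m v) x 0))
    +i* limn (series (fun k => sin_coeff t k * (mxpow M k *m v) x 0)).
Proof.
have cvg_entry (f : R ^nat) j : (forall k, `|f k| <= exp_coeff `|t| k) ->
    cvgn (series (fun k => f k * mxpow M k x j)).
  move=> ft; have -> : (fun k => f k * mxpow M k x j)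
                       = fun k => f k * (mxpow M k *m 1%:M) x j.
    by apply/funext => k; rewrite mulmx1.
  exact: is_cvg_series_mxpow (normr_ge0 t) ft.
rewrite mxE; under eq_bigr do rewrite expi_mx_entry mxE complex_mul_real.
have sumE (f : R ^nat) : (fun k => f k * (mxpow M k *m v) x 0)
                        = fun k => \sum_j f k * mxpow M k x j * v j 0.
  by apply/funext => k; rewrite mxE mulr_sumr; apply: eq_bigr => j _; rewrite mulrA.
rewrite complex_sum !sumE !lim_series_sum_mulr // => j; apply: cvg_entry => k.
  exact: norm_cos_coeff_le.
exact: norm_sin_coeff_le.
Qed.

Lemma expi_mx_eigenvector t (v : 'cV[R]_n) a : M *m v = a *: v ->
  expi_mx t *m cmx v = (cos (t * a) +i* sin (t * a)) *: cmx v.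
Proof.
move=> Mv; apply/matrixP => x y.
rewrite (ord1 y) expi_mx_mulmx !mxE complex_mul_real.
have -> : (fun k => cos_coeff t k * (mxpow M k *m v) x 0) = v x 0 *: cos_coeff (t * a).
  apply/funext => k; rewrite (mxpow_mulmx_eigen _ Mv) mxE.
  by rewrite -[RHS]/(v x 0 * cos_coeff (t * a) k) /cos_coeff /= exprMn; ring.
have -> : (fun k => sin_coeff t k * (mxpow M k *m v) x 0) = v x 0 *: sin_coeff (t * a).
  apply/funext => k; rewrite (mxpow_mulmx_eigen _ Mv) mxE.
  by rewrite -[RHS]/(v x 0 * sin_coeff (t * a) k) /sin_coeff /= exprMn; ring.
rewrite !lim_seriesZ; [|exact: is_cvg_series_sin_coeff|exact: is_cvg_series_cos_coeff].
rewrite (_ : cos (t * a) = limn (series (cos_coeff (t * a)))); last by rewrite unlock.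
rewrite (_ : sin (t * a) = limn (series (sin_coeff (t * a)))); last by rewrite unlock.
by congr (_ +i* _); exact: mulrC.
Qed.

Lemma expi_mx_mulmx_eq0 (v : 'cV[R]_n) x :
  (forall t, 0 < t -> (expi_mx t *m cmx v) x 0 = 0) -> (M *m v) x 0 = 0.
Proof.
move=> h0; have -> : M *m v = mxpow M 1 *m v by rewrite mxpowS mulmx1.
apply: (sin_series_coeff1_eq0 (w := fun k => (mxpow M k *m v) x 0))
         (mx_l1_ge0 v) (mx_l1_ge0 M) _ _.
  by move=> k; apply: le_trans (ler_norm_mx_l1 _ x 0) (mx_l1_mxpow_mulmx_le _ _ _).
move=> t /andP[t0 _].
by have := congr1 (@complex.Im R) (h0 t t0); rewrite expi_mx_mulmx.
Qed.

End MatrixExponential.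

Lemma mulmx_delta_sub (T : pzRingType) m (A : 'M[T]_m) (i j x : 'I_m) :
  (A *m (delta_mx i 0 - delta_mx j 0 : 'cV_m)) x 0 = A x i - A x j.
Proof. by rewrite mulmxBr -!colE !mxE. Qed.

Section Twins.
Variables (n : nat) (adj : rel 'I_n).
Hypotheses (adj_sym : symmetric adj) (adj_irr : irreflexive adj).
Variables a b : 'I_n.

Lemma twinsP : twins adj a b <-> forall x, x != a -> x != b -> adj x a = adj x b.
Proof.
rewrite /twins; split => [tw x xa xb | h].
  by move/setP/(_ x): tw; rewrite !inE xa xb /= (adj_sym a) (adj_sym b).
apply/setP => x; rewrite !inE.
have [-> | xa] := eqVneq x a; first by rewrite adj_irr andbF.
have [-> | xb] := eqVneq x b; first by rewrite adj_irr andbF.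
by rewrite /= adj_sym h // adj_sym.
Qed.

Variable R : realType.
Local Notation v := (delta_mx a 0 - delta_mx b 0 : 'cV[R]_n).

Lemma laplacianE x y :
  laplacian R adj x y = (x == y)%:R * #|nbhd adj x|%:R - (adj x y)%:R.
Proof. by rewrite !mxE; case: eqP; rewrite ?mul1r ?mul0r. Qed.

Lemma laplacian_mul_pair x : x != a -> x != b ->
  (laplacian R adj *m v) x 0 = (adj x b)%:R - (adj x a)%:R.
Proof.
move=> xa xb; rewrite mulmx_delta_sub !laplacianE (negbTE xa) (negbTE xb).
by rewrite !mul0r !sub0r opprK addrC.
Qed.

Lemma twins_laplacian_eigen : a != b -> twins adj a b ->
  laplacian R adj *m v = (#|nbhd adj a| + adj a b)%:R *: v.
Proof.
move=> ab tw; apply/matrixP => x y; rewrite (ord1 y).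
have dab : #|nbhd adj a| = #|nbhd adj b|.
  by rewrite (cardsD1 b) [RHS](cardsD1 a) tw !inE adj_sym.
have [-> | xa] := eqVneq x a.
  rewrite mulmx_delta_sub !laplacianE !mxE (negbTE ab) adj_irr eqxx natrD /=.
  by ring.
have [-> | xb] := eqVneq x b.
  rewrite mulmx_delta_sub !laplacianE !mxE eq_sym (negbTE ab) adj_irr adj_sym.
  by rewrite -dab eqxx natrD /=; ring.
rewrite laplacian_mul_pair // !mxE (negbTE xa) (negbTE xb) (twinsP.1 tw) //.
by rewrite !subrr mulr0.
Qed.

End Twins.

Lemma transitionE (R : realType) n (adj : rel 'I_n) t :
  transition adj t = expi_mx (laplacian R adj) t.
Proof. by []. Qed.

Theorem mainTheorem9 (R : realType) (n : nat) (adj : rel 'I_n)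
  (hG : simple_graph adj) (a b : 'I_n) (hab : a != b) :
  pair_fixed R adj a b <-> twins adj a b.
Proof.
have [adj_sym adj_irr] := hG.
set v : 'cV[R]_n := delta_mx a 0 - delta_mx b 0.
have evecE : evec R a - evec R b = map_mx (fun x : R => x%:C%C) v.
  by apply/matrixP => i j; rewrite !mxE rmorphB /= !rmorph_nat.
rewrite /pair_fixed evecE; split => [fixed | tw].
  apply/(twinsP adj_sym adj_irr) => x xa xb.
  have Lv0 : (laplacian R adj *m v) x 0 = 0.
    apply: expi_mx_mulmx_eq0 => t t0; have [g [_ Ug]] := fixed t (ltW t0).
    by rewrite -transitionE Ug !mxE (negbTE xa) (negbTE xb) subrr mulr0.
  move/eqP: Lv0; rewrite laplacian_mul_pair // subr_eq0 eqr_nat.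
  by case: (adj x a); case: (adj x b).
have Lv := twins_laplacian_eigen adj_sym adj_irr R hab tw.
move=> t _; set lam : R := (#|nbhd adj a| + adj a b)%:R.
exists (cos (t * lam) +i* sin (t * lam))%C; split; first exact: cos2Dsin2.
by rewrite transitionE (expi_mx_eigenvector _ Lv).
Qed.
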